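(* Let $(\Omega,\mathcal F)$ be a measurable space with $\Sigma\neq\emptyset$, $\nu$ a finite measure, and $\mu$ a finite measure with $\mu\ll\nu$. Let $F_\mu(y)=\nu(\{\omega:\frac{d\mu}{d\nu}(\omega)\le y\})$ ($y\ge0$), $F_\mu^{-1}(\beta)=\inf\{z\ge0: F_\mu(z)>\beta\}$ ($\beta\ge0$), and $v_\mu(A)=\int_0^\infty\min(\nu(\Omega)-F_\mu(z),\nu(A))\,dz$. Then $$v_\mu(A)=\int_{\nu(A^c)}^{\nu(\Omega)}F_\mu^{-1}(\beta)\,d\beta,\qquad A\in\mathcal F.$$
   Context: $\Sigma$ denotes the set of all classes $\mathcal I\subset\mathcal F$ that are chains (totally ordered by inclusion), contain $\emptyset$ and $\Omega$, and generate $\mathcal F$ as a $\sigma$-algebra. $\frac{d\mu}{d\nu}$ is the non-negative Radon–Nikodym derivative. *)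

From HB Require Import structures.
From mathcomp Require Import all_boot all_order all_algebra.
From mathcomp Require Import all_classical all_reals all_analysis.
Set Implicit Arguments. Unset Strict Implicit. Unset Printing Implicit Defensive.
Import Order.TTheory GRing.Theory Num.Theory.
Import numFieldNormedType.Exports.
Local Open Scope classical_set_scope.
Local Open Scope ring_scope.

Definition Sigma_class d (T : measurableType d) (I : set (set T)) : Prop :=
  [/\ I `<=` measurable,
      (forall A B, I A -> I B -> A `<=` B \/ B `<=` A),
      I set0, I setT &
      <<s I >> = measurable].

Definition Sigma_nonempty d (T : measurableType d) : Prop :=
  exists I : set (set T), Sigma_class I.

Local Open Scope ereal_scope.
Local Open Scope charge_scope.

Section defs.
Context d (T : measurableType d) (R : realType).
Variables (nu mu : {finite_measure set T -> \bar R}).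

Definition Fmu (y : R) : \bar R := nu [set w | ('d (charge_of_finite_measure mu) '/d nu) w <= y%:E].

(* F_mu^{-1}(beta) = inf {z >= 0 : F_mu(z) > beta}  (inf of empty set = +oo) *)
Definition Fmu_inv (b : R) : \bar R :=
  ereal_inf [set z%:E | z in [set z : R | (0 <= z)%R /\ b%:E < Fmu z]].

Definition vmu (A : set T) : \bar R :=
  \int[lebesgue_measure]_(z in `[0%R, +oo[%classic) mine (nu setT - Fmu z) (nu A).
End defs.

From HB Require Import structures.
From mathcomp Require Import all_boot all_order all_algebra.
From mathcomp Require Import all_classical all_reals all_analysis.
From mathcomp Require Import measurable_realfun lra.
Import Order.TTheory GRing.Theory Num.Theory.
Import numFieldNormedType.Exports.
Local Open Scope classical_set_scope.
Local Open Scope ring_scope.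
Local Open Scope ereal_scope.

(* Write N = nu(Omega), a = nu(A) and F for F_mu, a nondecreasing function with
   values in [0, N].  Both sides are the Lebesgue measure of the plane region
   {(z, b) | 0 <= z, N - a <= b <= N, F z <= b}.  Its section at z is the
   interval [max (N - a) (F z), N] of length min (N - F z) a, and, F being
   nondecreasing, its section at b lies between [0, F^-1(b)[ and [0, F^-1(b)],
   so it has measure F^-1(b); Tonelli's theorem concludes. *)

Section sublevel_measure.
Context {R : realType} (F : R -> R).
Hypothesis F_nd : {homo F : x y / (x <= y)%R}.

Lemma measurable_sublevel_nonneg (b : R) :
  measurable [set z : R | (0 <= z)%R /\ (F z <= b)%R].
Proof.
have -> : [set z : R | (0 <= z)%R /\ (F z <= b)%R] =
    `[0%R, +oo[ `&` (setT `&` F @^-1` `]-oo, b]).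
  by apply/seteqP; split => z /=; rewrite !in_itv /= ?andbT => -[-> //] [].
by apply: measurableI => //; exact: nondecreasing_measurable.
Qed.

Lemma sublevel_nonneg_sandwich (b : R)
    (U := [set z : R | (0 <= z)%R /\ (b < F z)%R]) : U !=set0 ->
  `[0%R, inf U[ `<=` [set z | (0 <= z)%R /\ (F z <= b)%R] /\
  [set z | (0 <= z)%R /\ (F z <= b)%R] `<=` `[0%R, inf U].
Proof.
move=> U0; have lbU : has_lbound U by exists 0%R => z [].
split => z.
  rewrite /= in_itv /= => /andP[z0 zm]; split => //.
  rewrite leNgt; apply/negP => bz.
  by move: zm; rewrite ltNge (ge_inf lbU).
move=> [z0 zb]; rewrite /= in_itv /= z0 /= leNgt; apply/negP => mz.
have [u [_ bu] uz] := inf_lt U0 mz.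
by have := lt_le_trans bu (le_trans (F_nd _ _ (ltW uz)) zb); rewrite ltxx.
Qed.

Lemma lebesgue_measure_sublevel_nonneg (b : R) :
  lebesgue_measure [set z : R | (0 <= z)%R /\ (F z <= b)%R] =
  ereal_inf [set z%:E | z in [set z : R | (0 <= z)%R /\ (b < F z)%R]].
Proof.
set S := [set z | _ /\ _]; set U := [set z | _ /\ _].
have mS : measurable S := measurable_sublevel_nonneg b.
have [U0|noU] := pselect (U !=set0); last first.
  have -> : U = set0 by apply/seteqP; split => // z Uz; apply: noU; exists z.
  have -> : S = `[0%R, +oo[%classic.
    apply/seteqP; split => z /=; rewrite in_itv /= andbT; first by case.
    move=> z0; split => //; rewrite leNgt; apply/negP => bz.
    by apply: noU; exists z.
  by rewrite image_set0 ereal_inf0 lebesgue_measure_itv /= ltry.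
have lbU : has_lbound U by exists 0%R => z [].
have [lowS upS] := @sublevel_nonneg_sandwich b U0.
have m0 : (0 <= inf U)%R by apply: lb_le_inf => // z [].
have mI (i : interval R) : [set` i] \in measurable by exact/mem_set.
have SI : lebesgue_measure S <= lebesgue_measure `[0%R, inf U]%classic :=
  le_measure lebesgue_measure (mem_set mS) (mI _) upS.
have IS : lebesgue_measure `[0%R, inf U[%classic <= lebesgue_measure S :=
  le_measure lebesgue_measure (mI _) (mem_set mS) lowS.
rewrite ereal_inf_EFin //; apply/le_anti/andP; split.
  rewrite (le_trans SI) // lebesgue_measure_itv /= lte_fin.
  by case: ltP; rewrite ?sube0.
rewrite (le_trans _ IS) // lebesgue_measure_itv /= lte_fin.
by case: ltP; rewrite ?sube0 // lee_fin.
Qed.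

End sublevel_measure.

Section quantile_region.
Context {R : realType} (F : R -> R) (N a : R).
Hypothesis F_nd : {homo F : x y / (x <= y)%R}.
Hypothesis F_leN : forall z, (F z <= N)%R.
Hypothesis a_ge0 : (0 <= a)%R.

Definition quantile_region : set (R * R) :=
  [set p | (0 <= p.1)%R /\ (N - a <= p.2 <= N)%R /\ (F p.1 <= p.2)%R].

Lemma measurable_quantile_region : measurable quantile_region.
Proof.
have -> : quantile_region = (`[0%R, +oo[ `*` `[(N - a)%R, N]) `&`
    (setT `&` (fun p : R * R => F p.1 - p.2)%R @^-1` `]-oo, 0%R]).
  rewrite /quantile_region; apply/seteqP; split => -[z b] /=;
    rewrite !in_itv /= ?andbT subr_le0.
    by case=> -> [-> ->].
  by case=> [[-> ->] [_ ->]].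
apply: measurableI; first exact: measurableX.
apply: (measurable_funB _ measurable_snd) => //.
exact: measurableT_comp (nondecreasing_measurable _ F_nd) measurable_fst.
Qed.

Lemma lebesgue_measure_xsection_quantile_region z :
  lebesgue_measure (xsection quantile_region z) =
  if (0 <= z)%R then mine (N - F z)%:E a%:E else 0.
Proof.
case: ifPn => z0; last first.
  suff -> : xsection quantile_region z = set0 by rewrite measure0.
  apply/seteqP; split => b //; rewrite /xsection /= in_setE.
  by case=> zge0; rewrite zge0 in z0.
have -> : xsection quantile_region z = `[Num.max (N - a)%R (F z), N]%classic.
  apply/seteqP; split => b; rewrite /xsection /= in_setE /= in_itv /= ge_max.
    by case=> _ [/andP[-> ->] ->].
  by move=> /andP[/andP[h1 h2] h3]; rewrite /quantile_region /= h1 h2 h3.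
have FzN := F_leN z.
have -> : mine (N - F z)%:E a%:E = (N - Num.max (N - a)%R (F z))%:E.
  rewrite -EFin_min; congr EFin.
  by case: (leP (N - a)%R (F z)); case: (leP (N - F z)%R a); lra.
rewrite lebesgue_measure_itv /= lte_fin; case: ltP => [_|NleM].
  by rewrite EFinB.
congr EFin; apply/esym/eqP.
by rewrite subr_eq0 eq_le NleM ge_max FzN gerBl a_ge0.
Qed.

Lemma ysection_quantile_region b :
  ysection quantile_region b =
  if (N - a <= b <= N)%R then [set z | (0 <= z)%R /\ (F z <= b)%R] else set0.
Proof.
apply/seteqP; split => z; rewrite /ysection /= in_setE /=; case: ifPn => //.
- by move=> _ [z0 [_ Fzb]].
- by move=> /negP bN [_ [/bN]].
- by move=> bI [z0 Fzb].
Qed.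

Lemma integral_min_survival_quantile :
  \int[lebesgue_measure]_(z in `[0%R, +oo[) mine (N - F z)%:E a%:E =
  \int[lebesgue_measure]_(b in `[(N - a)%R, N])
     ereal_inf [set z%:E | z in [set z : R | (0 <= z)%R /\ (b < F z)%R]].
Proof.
have mD := measurable_quantile_region.
have := indic_fubini_tonelli lebesgue_measure lebesgue_measure mD.
rewrite indic_fubini_tonelli_FE // indic_fubini_tonelli_GE //= => fubini.
rewrite integral_mkcond [RHS]integral_mkcond.
transitivity (\int[lebesgue_measure]_z lebesgue_measure (xsection quantile_region z)).
  apply: eq_integral => z _; rewrite patchE lebesgue_measure_xsection_quantile_region.
  by rewrite mem_setE in_itv /= andbT.
rewrite fubini; apply: eq_integral => b _; rewrite patchE ysection_quantile_region.
rewrite mem_setE in_itv /=; case: ifPn => _; last exact: measure0.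
exact: lebesgue_measure_sublevel_nonneg.
Qed.

End quantile_region.

Lemma fine_measure_setC d (T : measurableType d) (R : realType)
    (nu : {finite_measure set T -> \bar R}) (A : set T) : measurable A ->
  fine (nu (~` A)) = (fine (nu setT) - fine (nu A))%R.
Proof.
move=> mA; rewrite -setTD measureD // ?setTI ?fineB ?fin_num_measure //.
by rewrite ltey_eq fin_num_measure.
Qed.

Section radon_nikodym_cdf.
Local Open Scope charge_scope.
Context d (T : measurableType d) (R : realType).

Lemma measurable_Radon_Nikodym (nu : {charge set T -> \bar R})
    (mu : {sigma_finite_measure set T -> \bar R}) :
  measurable_fun setT ('d nu '/d mu).
Proof.
have [numu|numu] := pselect (nu `<< mu).
  exact: measurable_int (Radon_Nikodym_integrable numu).
by rewrite /Radon_Nikodym; case: pselect.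
Qed.

Variables nu mu : {finite_measure set T -> \bar R}.

Lemma measurable_Radon_Nikodym_le (y : R) :
  measurable [set w | ('d (charge_of_finite_measure mu) '/d nu) w <= y%:E].
Proof.
have := measurable_Radon_Nikodym (charge_of_finite_measure mu) nu
  measurableT _ (emeasurable_itv `]-oo, y%:E]).
by rewrite setTI; congr measurable; apply/seteqP; split => w; rewrite /= in_itv.
Qed.

Definition Fmur (y : R) : R := fine (Fmu nu mu y).

Lemma FmuE y : Fmu nu mu y = (Fmur y)%:E.
Proof.
by rewrite /Fmur fineK // fin_num_measure //; exact: measurable_Radon_Nikodym_le.
Qed.

Lemma Fmur_nd : {homo Fmur : x y / (x <= y)%R}.
Proof.
move=> x y xy; rewrite -lee_fin -!FmuE.
apply: le_measure; rewrite ?inE //; try exact: measurable_Radon_Nikodym_le.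
by move=> w /= h; rewrite (le_trans h) // lee_fin.
Qed.

Lemma Fmur_le_total y : (Fmur y <= fine (nu setT))%R.
Proof.
rewrite -lee_fin -FmuE fineK ?fin_num_measure //.
by apply: le_measure; rewrite ?inE //; exact: measurable_Radon_Nikodym_le.
Qed.

Lemma Fmu_invE (b : R) : Fmu_inv nu mu b =
  ereal_inf [set z%:E | z in [set z : R | (0 <= z)%R /\ (b < Fmur z)%R]].
Proof.
congr ereal_inf; congr image; apply/seteqP; split => z /=;
  by rewrite FmuE lte_fin.
Qed.

Lemma vmuE (A : set T) : measurable A ->
  vmu nu mu A = \int[lebesgue_measure]_(z in `[0%R, +oo[)
    mine (fine (nu setT) - Fmur z)%:E (fine (nu A))%:E.
Proof.
move=> mA; apply: eq_integral => z _.
by rewrite EFinB -FmuE !fineK ?fin_num_measure.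
Qed.

End radon_nikodym_cdf.

Theorem proposition15 (d : measure_display) (T : measurableType d) (R : realType)
  (nu mu : {finite_measure set T -> \bar R}) :
  Sigma_nonempty T -> mu `<< nu ->
  forall A : set T, measurable A ->
  vmu nu mu A =
  \int[lebesgue_measure]_(b in `[fine (nu (~` A)), fine (nu setT)]%classic)
     Fmu_inv nu mu b.
Proof.
move=> _ _ A mA.
have nuA_ge0 : (0 <= fine (nu A))%R by rewrite fine_ge0 ?measure_ge0.
rewrite vmuE // fine_measure_setC // integral_min_survival_quantile //.
- by apply: eq_integral => b _; rewrite Fmu_invE.
- exact: Fmur_nd.
- exact: Fmur_le_total.
Qed.
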